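(* Let $F(X;\theta)=f_L\circ\cdots\circ f_1(X)$ be a convolutional network with parameters $\theta=\{W^1,\dots,W^L,B^1,\dots,B^L\}$, and let $\omega_t=f_L\circ\cdots\circ f_t$ and $\alpha_t=f_t\circ\cdots\circ f_1$ for $t=1,\dots,L$, with $\omega_{L+1}$ and $\alpha_0$ the identity maps. Let $V,X\in\mathbb{R}^{n_1\times\ell_1}\otimes\mathbb{R}^{m_1}$, $t\in\{1,\dots,L\}$, and $X^t=\alpha_{t-1}(X)$. Then for a parameter $\theta^t\in\{W^t,B^t\}$, $$\big(\nabla_{\theta^t}\mathrm{D}F(X;\theta)\llcorner V\big)^*=\nabla^*_{\theta^t}f_t(X^t)\cdot\Big((\mathrm{D}\alpha_t(X)\cdot V)\lrcorner\mathrm{D}^2\omega_{t+1}(X^{t+1})\Big)^*+\Big((\mathrm{D}\alpha_{t-1}(X)\cdot V)\lrcorner\mathrm{D}\nabla_{\theta^t}f_t(X^t)\Big)^*\cdot\mathrm{D}^*\omega_{t+1}(X^{t+1}).$$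
   Context: All spaces are finite-dimensional real inner product spaces with tensor products carrying the induced inner product; $L^*$ denotes the adjoint. For a map $g(x;\theta)$: $\mathrm{D}g$ is the derivative in the state $x$ and $\nabla_\theta g$ the derivative in the parameter $\theta$ (both linear maps), $\mathrm{D}^*g,\nabla^*_\theta g$ their adjoints; $\mathrm{D}^2g(x)$ is the bilinear map $(e,\bar e)\mapsto\frac{d}{dt}\mathrm{D}g(x+te)\cdot\bar e|_{t=0}$; $\mathrm{D}\nabla_\theta g(x;\theta)$ is the bilinear map $(e,u)\mapsto\frac{d}{dt}\nabla_\theta g(x+te;\theta)\cdot u|_{t=0}$; $\nabla_\theta\mathrm{D}g(x;\theta)$ is the bilinear map $(u,e)\mapsto\frac{d}{dt}\mathrm{D}g(x;\theta+tu)\cdot e|_{t=0}$. For a bilinear $B(\cdot,\cdot)$, $y\lrcorner B$ is the linear map $e\mapsto B(y,e)$ and $B\llcorner y$ is $e\mapsto B(e,y)$. The network: for $t=1,\dots,L$, $f_t:\mathbb{R}^{n_t\times\ell_t}\otimes\mathbb{R}^{m_t}\to\mathbb{R}^{n_{t+1}\times\ell_{t+1}}\otimes\mathbb{R}^{m_{t+1}}$ is $f_t(X^t)=\Psi_t\big(S_t(C^t(W^t,X^t)+B^t)\big)$ with parameters $W^t\in\mathbb{R}^{p_t\times q_t}\otimes\mathbb{R}^{m_{t+1}}$, $B^t\in\mathbb{R}^{\bar n_t\times\bar\ell_t}\otimes\mathbb{R}^{m_{t+1}}$, where (with orthonormal bases $\{e_i\}$ of $\mathbb{R}^{m_t}$,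 $\{\tilde e_a\}$ of $\mathbb{R}^{m_{t+1}}$, $\{E_{jk}\}$ of $\mathbb{R}^{n_t\times\ell_t}$, $\{\bar E_{jk}\}$ of $\mathbb{R}^{\bar n_t\times\bar\ell_t}$, $\{\tilde E_{rs}\}$ of $\mathbb{R}^{p_t\times q_t}$): $C^t(W,X)=\sum_aC_a(W,X)\otimes\tilde e_a$ with $C_a(W,X)=\sum_{j=1}^{\bar n_t}\sum_{k=1}^{\bar\ell_t}\langle W_a,\Phi_{A_a}(\mathcal{K}_{1+(j-1)\Delta,1+(k-1)\Delta}(X))\rangle\bar E_{jk}$ for $W=\sum_aW_a\otimes\tilde e_a$, fixed $A_a\in\mathbb{R}^{m_t}$ and stride $\Delta\ge1$; $\mathcal{K}_{jk}(\sum_iX_i\otimes e_i)=\sum_i\kappa_{jk}(X_i)\otimes e_i$, $\kappa_{jk}(Q)=\sum_{r,s}\langle Q,E_{j+r-1,k+s-1}\rangle\tilde E_{rs}$ (dimensions such that crops are defined); $\Phi_v(\sum_iU_i\otimes e_i)=\sum_iv_iU_i$ for $v=\sum_iv_ie_i$; $S_t(\sum_aY_a\otimes\tilde e_a)=\sum_a\sigma(Y_a)\otimes\tilde e_a$ with $\sigma(Y)=\sum_{j,k}\bar\sigma_t(\langle Y,\bar E_{jk}\rangle)\bar E_{jk}$ for a twice continuously differentiable $\bar\sigma_t:\mathbb{R}\to\mathbb{R}$; and $\Psi_t(\sum_aY_a\otimes\tilde e_a)=\sum_a\psi_t(Y_a)\otimes\tilde e_a$ for a linear $\psi_t:\mathbb{R}^{\bar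 n_t\times\bar\ell_t}\to\mathbb{R}^{n_{t+1}\times\ell_{t+1}}$. In the claim, $\mathrm{D}F(X;\theta)$ is the derivative of $F$ in $X$, and $f_t$, $\omega_t$, $\alpha_t$ depend on the parameters, which are held fixed except $\theta^t$ where differentiated. *)

From HB Require Import structures.
From mathcomp Require Import all_boot all_order all_algebra.
From mathcomp Require Import all_classical all_reals all_analysis.
Set Implicit Arguments.
Unset Strict Implicit.
Unset Printing Implicit Defensive.
Import Order.TTheory GRing.Theory Num.Theory.
Import numFieldNormedType.Exports.
Local Open Scope ring_scope.

(* The tensor space R^{a x b} (x) R^c is represented by the matrix type       *)
(*   tens a b c := 'M[R]_(c, a * b)                                            *)
(* whose i-th row is mxvec X_i, for X = \sum_i X_i (x) e_i (standard          *)
(* orthonormal bases, 0-indexed).  The Frobenius inner product of this matrix  *)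
(* type is exactly the induced inner product of the tensor product.           *)
(* Directional derivatives are MathComp-Analysis' 'D_v f x                    *)
(* (= d/dt f(x + t v) at t = 0).                                               *)

Section Tensors.
Context {R : realType}.

Definition tens (a b c : nat) := 'M[R]_(c, a * b).

Definition chan a b c (X : tens a b c) (i : 'I_c) : 'M[R]_(a, b) :=
  vec_mx (row i X).

Definition mktens a b c (F : 'I_c -> 'M[R]_(a, b)) : tens a b c :=
  \matrix_(i < c, j < a * b) mxvec (F i) 0 j.

Definition frob a b (M N : 'M[R]_(a, b)) : R :=
  \sum_(i < a) \sum_(j < b) M i j * N i j.

Definition adj a b c d (Lm : 'M[R]_(a, b) -> 'M[R]_(c, d)) :
    'M[R]_(c, d) -> 'M[R]_(a, b) :=
  fun y => \matrix_(i < a, j < b) frob y (Lm (delta_mx i j)).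

(* entry (i, j) (0-indexed) of Q; never used out of range under the          *)
(* "crops are defined" hypotheses *)
Definition mxat a b (Q : 'M[R]_(a, b)) (i j : nat) : R :=
  match (insub i : option 'I_a), (insub j : option 'I_b) with
  | Some i', Some j' => Q i' j'
  | _, _ => 0
  end.

(* kappa_{jk}: the p x q crop of Q with top-left corner at 0-indexed (j0,k0):*)
(* kappa_{jk}(Q) = \sum_{r,s} <Q, E_{j+r-1,k+s-1}> E~_{rs}, j0 = j-1, k0 = k-1 *)
Definition kappa p q a b (j0 k0 : nat) (Q : 'M[R]_(a, b)) : 'M[R]_(p, q) :=
  \matrix_(r < p, s < q) mxat Q (j0 + r) (k0 + s).

Definition Kop p q a b c (j0 k0 : nat) (X : tens a b c) : tens p q c :=
  mktens (fun i => kappa p q j0 k0 (chan X i)).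

Definition Phi p q c (v : 'rV[R]_c) (U : tens p q c) : 'M[R]_(p, q) :=
  \sum_(i < c) v 0 i *: chan U i.

(* row a of A is the vector A_a \in R^{m_t}.                                   *)
Definition conv a b c p q nb lb c' (D : nat) (A : 'M[R]_(c', c))
    (W : tens p q c') (X : tens a b c) : tens nb lb c' :=
  mktens (fun a' => \matrix_(j < nb, k < lb)
            frob (chan W a') (Phi (row a' A) (Kop p q (j * D) (k * D) X))).

Definition Sact a b c (s : R -> R) (Y : tens a b c) : tens a b c :=
  mktens (fun i => map_mx s (chan Y i)).

Definition Psiact a b a' b' c (psi : 'M[R]_(a, b) -> 'M[R]_(a', b'))
    (Y : tens a b c) : tens a' b' c :=
  mktens (fun i => psi (chan Y i)).

Definition C2 (s : R -> R) : Prop :=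
  [/\ forall x : R, derivable s x 1,
      forall x : R, derivable (derive1 s) x 1
    & continuous (derive1 (derive1 s))].

End Tensors.

(* Architecture: all layer-indexed data, layer t = 1..L                       *)
(*  n_ t, l_ t, m_ t : input dims of f_t (t = 1..L+1)                           *)
(*  p_ t, q_ t : filter dims;  nb_ t, lb_ t : \bar n_t, \bar l_t               *)
(*  stride t : Delta (of layer t);  Avec t : rows A_a;  sig t : \bar sigma_t   *)
Record arch (R : realType) := Arch {
  n_ : nat -> nat; l_ : nat -> nat; m_ : nat -> nat;
  p_ : nat -> nat; q_ : nat -> nat; nb_ : nat -> nat; lb_ : nat -> nat;
  stride : nat -> nat;
  Avec : forall t, 'M[R]_(m_ t.+1, m_ t);
  sig : nat -> R -> R;
  psi : forall t, {linear 'M[R]_(nb_ t, lb_ t) -> 'M[R]_(n_ t.+1, l_ t.+1)}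
}.

Section Network.
Context {R : realType} (ar : arch R).

Definition arch_wf (L : nat) : Prop :=
  forall t : nat, (1 <= t <= L)%N ->
  [/\ (0 < stride ar t)%N,
      (forall j : 'I_(nb_ ar t), j * stride ar t + p_ ar t <= n_ ar t)%N,
      (forall k : 'I_(lb_ ar t), k * stride ar t + q_ ar t <= l_ ar t)%N
    & C2 (sig ar t)].

Definition St (t : nat) := @tens R (n_ ar t) (l_ ar t) (m_ ar t).
Definition Wsp (t : nat) := @tens R (p_ ar t) (q_ ar t) (m_ ar t.+1).
Definition Bsp (t : nat) := @tens R (nb_ ar t) (lb_ ar t) (m_ ar t.+1).
Definition Wfam := forall t, Wsp t.
Definition Bfam := forall t, Bsp t.

Definition layer (t : nat) (w : Wsp t) (b : Bsp t) (X : St t) : St t.+1 :=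
  Psiact (psi ar t)
    (Sact (sig ar t) (conv (nb_ ar t) (lb_ ar t) (stride ar t) (Avec ar t) w X + b)).

Section Params.
Variables (W : Wfam) (B : Bfam).

(* alphaTo t = alpha_{t-1} = f_{t-1} o ... o f_1 for t >= 1 (alphaTo 1 = id); *)
(* alphaTo 0 is junk and never used. *)
Fixpoint alphaTo (t : nat) : St 1 -> St t :=
  match t return St 1 -> St t with
  | 0 => fun _ => 0
  | u.+1 =>
      match u return (St 1 -> St u) -> St 1 -> St u.+1 with
      | 0 => fun _ x => x
      | v.+1 => fun rec x => layer (W v.+1) (B v.+1) (rec x)
      end (alphaTo u)
  end.

Fixpoint omk (k t : nat) : St t -> St (k + t)%N :=
  match k return St t -> St (k + t)%N with
  | 0 => fun x => x
  | k'.+1 => fun x => layer (W (k' + t)%N) (B (k' + t)%N) (@omk k' t x)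
  end.

Definition castSt (i j : nat) (e : i = j) (x : St i) : St j :=
  ecast k (St k) e x.

Definition omega (L t : nat) (ht : (t <= L.+1)%N) : St t -> St L.+1 :=
  fun x => castSt (subnK ht) (@omk (L.+1 - t)%N t x).

Definition netF (L : nat) : St 1 -> St L.+1 := alphaTo L.+1.

End Params.

Definition updW (W : Wfam) (t : nat) (w : Wsp t) : Wfam :=
  @dfwith nat Wsp W t w.
Definition updB (B : Bfam) (t : nat) (b : Bsp t) : Bfam :=
  @dfwith nat Bsp B t b.

End Network.

(* Write x = alpha_{t-1}(X), v = D alpha_{t-1}(X) V and phi(theta, y) for the
   layer f_t as a function of its parameter theta = theta^t and of its input.
   Only phi depends on theta, so by the chain rule
     D_V F(X; theta) = D omega_{t+1}(phi(theta, x)) (D_y phi(theta, x) v).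
   Differentiating along u in theta (product and chain rules) gives
     D^2 omega_{t+1}(D_y phi v, D_theta phi u)
       + D omega_{t+1}(D_y D_theta phi (v, u)),
   once the second derivative of omega_{t+1} and the mixed partials of phi are
   known to be symmetric. Each term is a linear map of u followed by a linear
   map into the output space, so taking adjoints gives the two terms of the
   formula. *)

From Pilot Require Import Defs.
From HB Require Import structures.
From mathcomp Require Import all_boot all_order all_algebra.
From mathcomp Require Import all_classical all_reals all_analysis.
From mathcomp Require Import zify.

Set Implicit Arguments.
Unset Strict Implicit.
Unset Printing Implicit Defensive.

Import Order.TTheory GRing.Theory Num.Theory.
Import numFieldNormedType.Exports.
Local Open Scope ring_scope.

Section DirectionalDerivative.
Context {R : realFieldType}.

Lemma derive_line_eq (V1 V2 W : normedModType R) (f : V1 -> W) (g : V2 -> W)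
    a v b w :
  (forall h : R, f (h *: v + a) = g (h *: w + b)) -> 'D_v f a = 'D_w g b.
Proof.
move=> fg; have fagb : f a = g b by have := fg 0; rewrite !scale0r !add0r.
rewrite /derive (_ : (fun h => _) =
  fun h => h^-1 *: ((g \o shift b) (h *: w) - g b)) //.
by apply/funext => h /=; rewrite fagb fg.
Qed.

Lemma differentiable_bigsum (V W : normedModType R) (I : Type) (r : seq I)
    (F : I -> V -> W) x :
  (forall i, differentiable (F i) x) ->
  differentiable (fun y => \sum_(i <- r) F i y) x.
Proof.
move=> dF; rewrite -fct_sumE.
elim/big_ind: _ => [|f g df dg|i _]; last exact: dF.
  exact: differentiable_cst 0 x.
exact: differentiableD.
Qed.

Lemma derive_bigsum (V W : normedModType R) (I : Type) (r : seq I)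
    (F : I -> V -> W) x v :
  (forall i, differentiable (F i) x) ->
  'D_v (fun y => \sum_(i <- r) F i y) x = \sum_(i <- r) 'D_v (F i) x.
Proof.
move=> dF; elim: r => [|i r IH].
  by under eq_fun do rewrite big_nil; rewrite big_nil derive_cst.
under eq_fun do rewrite big_cons; rewrite big_cons -IH.
by rewrite deriveD //; apply: diff_derivable; [|exact: differentiable_bigsum].
Qed.

(* [deriveD] and [deriveM] in the pointwise form needed to rewrite under binders. *)
Lemma derive_add (V W : normedModType R) (f g : V -> W) x v :
  derivable f x v -> derivable g x v ->
  'D_v (fun y => f y + g y) x = 'D_v f x + 'D_v g x.
Proof. exact: deriveD. Qed.

Lemma derive_mul (V : normedModType R) (f g : V -> R) x v :
  derivable f x v -> derivable g x v ->
  'D_v (fun y => f y * g y) x = f x * 'D_v g x + g x * 'D_v f x.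
Proof. exact: deriveM. Qed.

Lemma derive_coord m n (M b : 'M[R]_(m, n)) i j :
  'D_b (fun N : 'M[R]_(m, n) => N i j) M = b i j.
Proof. by rewrite -{2}(derive_id M b) derive_mx ?mxE //; exact: derivable_id. Qed.

Lemma derive_mxE (V : normedModType R) m n (f : V -> 'M[R]_(m, n)) x v i j :
  derivable f x v -> 'D_v f x i j = 'D_v (fun y => f y i j) x.
Proof. by move=> df; rewrite derive_mx // mxE. Qed.

Lemma differentiable_mx (V : normedModType R) m n (f : V -> 'M[R]_(m, n)) x :
  (forall i j, differentiable (fun y => f y i j) x) -> differentiable f x.
Proof.
move=> df; rewrite (_ : f = fun y => \sum_i \sum_j f y i j *: delta_mx i j).
  by do 2!apply: differentiable_bigsum => ?; exact: differentiableZl.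
by apply/funext => y; rewrite [LHS]matrix_sum_delta.
Qed.

Lemma derive_comp (U V W : normedModType R) (f : U -> V) (g : V -> W) x v :
  differentiable f x -> differentiable g (f x) ->
  'D_v (g \o f) x = 'D_('D_v f x) g (f x).
Proof.
move=> df dg; rewrite deriveE; last exact: differentiable_comp.
by rewrite diff_comp // /= -!deriveE.
Qed.

Lemma derive_dirP (V W : normedModType R) (f : V -> W) x k u v :
  differentiable f x -> 'D_(k *: u + v) f x = k *: 'D_u f x + 'D_v f x.
Proof. by move=> df; rewrite !deriveE // linearP. Qed.

Lemma deriveE_delta (W : normedModType R) m n (f : 'M[R]_(m, n) -> W) x b :
  differentiable f x ->
  'D_b f x = \sum_(kl : 'I_m * 'I_n) b kl.1 kl.2 *: 'D_(delta_mx kl.1 kl.2) f x.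
Proof.
move=> df; rewrite deriveE // {1}[b]matrix_sum_delta pair_big /= linear_sum.
by apply: eq_bigr => kl _; rewrite linearZ /= deriveE.
Qed.

Lemma derive_comp_real (V : normedModType R) (s : R -> R) (f : V -> R) x v :
  derivable s (f x) 1 -> differentiable f x ->
  'D_v (s \o f) x = 'D_v f x * derive1 s (f x).
Proof.
move=> ds df; have ds' : differentiable s (f x) by apply/derivable1_diffP.
rewrite deriveE; last exact: differentiable_comp.
by rewrite diff_comp // deriv1E //= -deriveE.
Qed.

End DirectionalDerivative.

Section SymmetricSecondDerivatives.
Context {R : realFieldType}.

(* Symmetry of the second directional derivatives is part of the definition and
   is checked directly for every construction below. *)
Definition C2sym {V : normedModType R} (f : V -> R) : Prop :=
  [/\ forall x, differentiable f x,
      forall b x, differentiable ('D_b f) x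
    & forall a b x, 'D_a ('D_b f) x = 'D_b ('D_a f) x].

Definition C2sym_mx {V : normedModType R} m n (f : V -> 'M[R]_(m, n)) : Prop :=
  forall i j, C2sym (fun x => f x i j).

Lemma C2sym_cst {V : normedModType R} (c : R) : C2sym (fun _ : V => c).
Proof.
have D0 b : 'D_b (fun _ : V => c) = fun _ => 0.
  by apply/funext => x; rewrite derive_cst.
by split=> [x|b x|a b x]; rewrite ?D0 ?derive_cst //; exact: differentiable_cst.
Qed.

Lemma C2sym_coord m n i j : C2sym (fun x : 'M[R]_(m, n) => x i j).
Proof.
have D b : 'D_b (fun x : 'M[R]_(m, n) => x i j) = fun _ => b i j.
  by apply/funext => x; rewrite derive_coord.
split=> [x|b x|a b x]; rewrite ?D ?derive_cst //.
exact: differentiable_coord.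
Qed.

Lemma C2symD {V : normedModType R} (f g : V -> R) :
  C2sym f -> C2sym g -> C2sym (fun x => f x + g x).
Proof.
move=> [df d2f sf] [dg d2g sg].
have D b : 'D_b (fun x => f x + g x) = fun x => 'D_b f x + 'D_b g x.
  by apply/funext => x; rewrite derive_add //; exact: diff_derivable.
split=> [x|b x|a b x]; rewrite ?D; first exact: differentiableD.
  exact: differentiableD.
rewrite !derive_add; try exact: diff_derivable.
by rewrite sf sg.
Qed.

Lemma C2symM {V : normedModType R} (f g : V -> R) :
  C2sym f -> C2sym g -> C2sym (fun x => f x * g x).
Proof.
move=> [df d2f sf] [dg d2g sg].
have D b : 'D_b (fun x => f x * g x) = fun x => f x * 'D_b g x + g x * 'D_b f x.
  by apply/funext => x; rewrite derive_mul //; exact: diff_derivable.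
split=> [x|b x|a b x]; rewrite ?D; first exact: differentiableM.
  by apply: differentiableD; exact: differentiableM.
rewrite !derive_add; try by apply: diff_derivable; exact: differentiableM.
rewrite !derive_mul; try exact: diff_derivable.
rewrite sf sg addrACA [in RHS]addrACA [_ * 'D_a f x]mulrC [_ * 'D_a g x]mulrC.
by rewrite [_ * 'D_b f x + _]addrC.
Qed.

Lemma C2sym_sum {V : normedModType R} (I : Type) (r : seq I) (F : I -> V -> R) :
  (forall i, C2sym (F i)) -> C2sym (fun x => \sum_(i <- r) F i x).
Proof.
move=> CF; elim: r => [|i r IH].
  rewrite (_ : (fun x => _) = fun _ => 0); first exact: C2sym_cst.
  by apply/funext => x; rewrite big_nil.
rewrite (_ : (fun x => _) = fun x => F i x + \sum_(j <- r) F j x).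
  exact: C2symD (CF i) IH.
by apply/funext => x; rewrite big_cons.
Qed.

Lemma C2sym_comp_real {V : normedModType R} (s : R -> R) (f : V -> R) :
  (forall y, derivable s y 1) -> (forall y, derivable (derive1 s) y 1) ->
  C2sym f -> C2sym (s \o f).
Proof.
move=> ds dds [df d2f sf].
have Ds y : differentiable s y by apply/derivable1_diffP.
have Dds y : differentiable (derive1 s) y by apply/derivable1_diffP.
have D b : 'D_b (s \o f) = fun x => 'D_b f x * (derive1 s \o f) x.
  by apply/funext => x; rewrite derive_comp_real.
split=> [x|b x|a b x]; rewrite ?D.
- exact: differentiable_comp.
- by apply: differentiableM => //; exact: differentiable_comp.
- rewrite !derive_mul; try by apply: diff_derivable => //; exact: differentiable_comp.
  rewrite !derive_comp_real; try solve [exact: dds | exact: df].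
  by rewrite sf mulrCA.
Qed.

End SymmetricSecondDerivatives.

Section MatrixValued.
Context {R : realFieldType}.

Lemma C2sym_mx_differentiable {V : normedModType R} m n (f : V -> 'M[R]_(m, n)) x :
  C2sym_mx f -> differentiable f x.
Proof. by move=> Cf; apply: differentiable_mx => i j; case: (Cf i j). Qed.

Lemma derive_C2sym_mxE {V : normedModType R} m n (f : V -> 'M[R]_(m, n)) x b i j :
  C2sym_mx f -> 'D_b f x i j = 'D_b (fun y => f y i j) x.
Proof.
by move=> Cf; rewrite derive_mxE //; exact/diff_derivable/C2sym_mx_differentiable.
Qed.

Lemma differentiable_derive_mx {V : normedModType R} m n (f : V -> 'M[R]_(m, n)) x b :
  C2sym_mx f -> differentiable ('D_b f) x.
Proof.
move=> Cf; apply: differentiable_mx => i j.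
rewrite (_ : (fun y => 'D_b f y i j) = 'D_b (fun y => f y i j)).
  by case: (Cf i j).
by apply/funext => y; exact: derive_C2sym_mxE.
Qed.

Lemma derive2_C2sym_mxE {V : normedModType R} m n (f : V -> 'M[R]_(m, n)) x a b i j :
  C2sym_mx f -> 'D_a ('D_b f) x i j = 'D_a ('D_b (fun y => f y i j)) x.
Proof.
move=> Cf; rewrite derive_mxE; last first.
  by apply: diff_derivable; exact: differentiable_derive_mx.
rewrite (_ : (fun y => 'D_b f y i j) = 'D_b (fun y => f y i j)) //.
by apply/funext => y; exact: derive_C2sym_mxE.
Qed.

Lemma derive2_C2sym_mx_sym {V : normedModType R} m n (f : V -> 'M[R]_(m, n)) x a b :
  C2sym_mx f -> 'D_a ('D_b f) x = 'D_b ('D_a f) x.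
Proof.
move=> Cf; apply/matrixP => i j.
apply: (etrans (derive2_C2sym_mxE x a b i j Cf)).
apply: esym; apply: (etrans (derive2_C2sym_mxE x b a i j Cf)).
by case: (Cf i j).
Qed.

Lemma derive2_dirP {V : normedModType R} m n (f : V -> 'M[R]_(m, n)) x c k u v :
  C2sym_mx f -> 'D_c ('D_(k *: u + v) f) x = k *: 'D_c ('D_u f) x + 'D_c ('D_v f) x.
Proof.
move=> Cf; have df y : differentiable f y := C2sym_mx_differentiable y Cf.
rewrite (_ : 'D_(k *: u + v) f = fun y => k *: 'D_u f y + 'D_v f y); last first.
  by apply/funext => y; rewrite (derive_dirP _ _ _ (df y)).
rewrite derive_add ?deriveZ //; apply: diff_derivable;
  try apply: differentiableZ; exact: differentiable_derive_mx.
Qed.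

Lemma linear_delta_sum m n p q (L : 'M[R]_(m, n) -> 'M[R]_(p, q)) x i j :
  (forall k u v, L (k *: u + v) = k *: L u + L v) ->
  L x i j = \sum_(kl : 'I_m * 'I_n) x kl.1 kl.2 * L (delta_mx kl.1 kl.2) i j.
Proof.
move=> linL.
pose L' : {linear _ -> _} := HB.pack L (GRing.isLinear.Build _ _ _ _ L linL).
have -> : L x = L' x by [].
rewrite {1}[x]matrix_sum_delta pair_big linear_sum summxE.
by apply: eq_bigr => kl _; rewrite linearZ mxE.
Qed.

Lemma C2sym_mx_linear m n p q (L : 'M[R]_(m, n) -> 'M[R]_(p, q)) :
  (forall k u v, L (k *: u + v) = k *: L u + L v) -> C2sym_mx L.
Proof.
move=> linL i j.
rewrite (_ : (fun x => L x i j) = fun x =>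
    \sum_(kl : 'I_m * 'I_n) x kl.1 kl.2 * L (delta_mx kl.1 kl.2) i j).
  by apply: C2sym_sum => kl; apply: C2symM; [exact: C2sym_coord|exact: C2sym_cst].
by apply/funext => x; exact: linear_delta_sum.
Qed.

Lemma C2sym_mx_addr {V : normedModType R} m n (f : V -> 'M[R]_(m, n)) c :
  C2sym_mx f -> C2sym_mx (fun x => f x + c).
Proof.
move=> Cf i j; rewrite (_ : (fun x => _) = fun x => f x i j + c i j).
  by apply: C2symD; [exact: Cf|exact: C2sym_cst].
by apply/funext => x; rewrite mxE.
Qed.

Lemma C2sym_mx_map m n (s : R -> R) :
  (forall y, derivable s y 1) -> (forall y, derivable (derive1 s) y 1) ->
  C2sym_mx (fun x : 'M[R]_(m, n) => map_mx s x).
Proof.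
move=> ds dds i j; rewrite (_ : (fun x => _) = s \o fun x : 'M[R]_(m, n) => x i j).
  exact: C2sym_comp_real ds dds (C2sym_coord i j).
by apply/funext => x; rewrite /= mxE.
Qed.

Lemma C2sym_mx_bilinear m n p1 q1 p2 q2 r s
    (beta : 'M[R]_(p1, q1) -> 'M[R]_(p2, q2) -> 'M[R]_(r, s))
    (P1 : 'M[R]_(m, n) -> 'M[R]_(p1, q1)) (P2 : 'M[R]_(m, n) -> 'M[R]_(p2, q2)) :
  (forall y k x x', beta (k *: x + x') y = k *: beta x y + beta x' y) ->
  (forall x k y y', beta x (k *: y + y') = k *: beta x y + beta x y') ->
  (forall k z z', P1 (k *: z + z') = k *: P1 z + P1 z') ->
  (forall k z z', P2 (k *: z + z') = k *: P2 z + P2 z') ->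
  C2sym_mx (fun z => beta (P1 z) (P2 z)).
Proof.
move=> lin1 lin2 linP1 linP2 i j.
rewrite (_ : (fun z => _) = fun z => \sum_(kl : 'I_p1 * 'I_q1)
    P1 z kl.1 kl.2 * beta (delta_mx kl.1 kl.2) (P2 z) i j); last first.
  by apply/funext => z; exact: (linear_delta_sum _ _ _ (lin1 (P2 z))).
apply: C2sym_sum => kl; apply: C2symM; first exact: C2sym_mx_linear.
apply: (C2sym_mx_linear (L := fun z => beta (delta_mx kl.1 kl.2) (P2 z))).
by move=> k z z'; rewrite linP2 lin2.
Qed.

End MatrixValued.

Section SecondOrderChainRule.
Context {R : realFieldType}.

Lemma derive2_delta_sum m n (g : 'M[R]_(m, n) -> R) c w z :
  C2sym g -> 'D_c ('D_w g) z =
  \sum_(kl : 'I_m * 'I_n) w kl.1 kl.2 * 'D_c ('D_(delta_mx kl.1 kl.2) g) z.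
Proof.
move=> [dg d2g _].
rewrite (_ : 'D_w g = fun y =>
    \sum_(kl : 'I_m * 'I_n) w kl.1 kl.2 *: 'D_(delta_mx kl.1 kl.2) g y).
  rewrite derive_bigsum => [|kl]; last exact: differentiableZ.
  by apply: eq_bigr => kl _; rewrite deriveZ //; exact: diff_derivable.
by apply/funext => y; rewrite deriveE_delta.
Qed.

Lemma derive_param_delta_sum {U : normedModType R} m n (g : 'M[R]_(m, n) -> R)
    (a w : U -> 'M[R]_(m, n)) :
  (forall y, differentiable g y) ->
  (fun q => 'D_(w q) g (a q)) = fun q =>
    \sum_(kl : 'I_m * 'I_n) w q kl.1 kl.2 * 'D_(delta_mx kl.1 kl.2) g (a q).
Proof. by move=> dg; apply/funext => q; rewrite deriveE_delta. Qed.

Lemma differentiable_derive_param {U : normedModType R} m n (g : 'M[R]_(m, n) -> R)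
    (a w : U -> 'M[R]_(m, n)) p :
  C2sym g -> differentiable a p -> differentiable w p ->
  differentiable (fun q => 'D_(w q) g (a q)) p.
Proof.
move=> [dg d2g _] da dw; rewrite derive_param_delta_sum //.
apply: differentiable_bigsum => kl; apply: differentiableM.
  exact: differentiable_comp dw (differentiable_coord (w p) kl.1 kl.2).
exact: differentiable_comp da (d2g _ _).
Qed.

Lemma derive_derive_param {U : normedModType R} m n (g : 'M[R]_(m, n) -> R)
    (a w : U -> 'M[R]_(m, n)) p u :
  C2sym g -> differentiable a p -> differentiable w p ->
  'D_u (fun q => 'D_(w q) g (a q)) p =
  'D_('D_u a p) ('D_(w p) g) (a p) + 'D_('D_u w p) g (a p).
Proof.
move=> Cg da dw; have [dg d2g _] := Cg.
have dwkl kl : differentiable (fun q => w q kl.1 kl.2) p.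
  exact: differentiable_comp dw (differentiable_coord (w p) kl.1 kl.2).
have dgkl kl : differentiable (fun q => 'D_(delta_mx kl.1 kl.2) g (a q)) p.
  exact: differentiable_comp da (d2g _ _).
rewrite derive_param_delta_sum // derive_bigsum => [|kl]; last first.
  exact: differentiableM.
rewrite derive2_delta_sum // (deriveE_delta _ (dg _)) -big_split /=.
apply: eq_bigr => kl _; rewrite derive_mul; try exact: diff_derivable.
have -> : 'D_u (fun q => 'D_(delta_mx kl.1 kl.2) g (a q)) p =
    'D_('D_u a p) ('D_(delta_mx kl.1 kl.2) g) (a p) := derive_comp u da (d2g _ _).
rewrite -derive_mxE; last exact: diff_derivable.
by congr (_ + _); exact: mulrC.
Qed.

Lemma derive_derive_param_mx {U : normedModType R} m n r s
    (om : 'M[R]_(m, n) -> 'M[R]_(r, s)) (a w : U -> 'M[R]_(m, n)) p u :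
  C2sym_mx om -> differentiable a p -> differentiable w p ->
  'D_u (fun q => 'D_(w q) om (a q)) p =
  'D_('D_u a p) ('D_(w p) om) (a p) + 'D_('D_u w p) om (a p).
Proof.
move=> Com da dw.
have Dij i j : (fun q => 'D_(w q) om (a q) i j) =
    fun q => 'D_(w q) (fun y => om y i j) (a q).
  by apply/funext => q; exact: derive_C2sym_mxE.
rewrite derive_mx; last first.
  apply: diff_derivable; apply: differentiable_mx => i j; rewrite Dij.
  exact: differentiable_derive_param.
apply/matrixP => i j; rewrite mxE Dij derive_derive_param //.
rewrite [RHS]mxE.
apply: esym; congr (_ + _).
  exact: derive2_C2sym_mxE.
exact: derive_C2sym_mxE.
Qed.

Lemma C2sym_comp {V : normedModType R} m n (g : 'M[R]_(m, n) -> R)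
    (f : V -> 'M[R]_(m, n)) :
  C2sym g -> C2sym_mx f -> C2sym (g \o f).
Proof.
move=> Cg Cf; have [dg _ sg] := Cg.
have df x : differentiable f x := C2sym_mx_differentiable x Cf.
have D b : 'D_b (g \o f) = fun x => 'D_('D_b f x) g (f x).
  by apply/funext => x; rewrite derive_comp.
split=> [x|b x|a b x].
- exact: differentiable_comp.
- rewrite D; apply: differentiable_derive_param => //.
  exact: differentiable_derive_mx.
- rewrite (D b) (D a).
  apply: (etrans (derive_derive_param a Cg (df x) (differentiable_derive_mx x b Cf))).
  apply: esym.
  apply: (etrans (derive_derive_param b Cg (df x) (differentiable_derive_mx x a Cf))).
  apply: f_equal2; first exact: sg.
  by apply: (congr1 (derive g (f x))); exact: derive2_C2sym_mx_sym.
Qed.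

Lemma C2sym_mx_comp {V : normedModType R} m n p q (g : 'M[R]_(m, n) -> 'M[R]_(p, q))
    (f : V -> 'M[R]_(m, n)) :
  C2sym_mx g -> C2sym_mx f -> C2sym_mx (g \o f).
Proof. by move=> Cg Cf i j; exact: C2sym_comp (Cg i j) Cf. Qed.

End SecondOrderChainRule.

Section Adjoint.
Context {R : realType}.

Lemma adjD a b c d (F G : 'M[R]_(a, b) -> 'M[R]_(c, d)) Y :
  adj (fun u => F u + G u) Y = adj F Y + adj G Y.
Proof.
apply/matrixP => i j; rewrite !mxE /frob -big_split /=; apply: eq_bigr => k _.
by rewrite -big_split /=; apply: eq_bigr => l _; rewrite mxE mulrDr.
Qed.

Lemma adj_comp a b c d e f (A : 'M[R]_(c, d) -> 'M[R]_(e, f))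
    (P : 'M[R]_(a, b) -> 'M[R]_(c, d)) Y :
  (forall k u v, A (k *: u + v) = k *: A u + A v) ->
  adj P (adj A Y) = adj (A \o P) Y.
Proof.
move=> linA; apply/matrixP => i j; rewrite !mxE /frob.
under eq_bigr do under eq_bigr do rewrite mxE /frob mulr_suml.
under eq_bigr do under eq_bigr do under eq_bigr do rewrite mulr_suml.
under [RHS]eq_bigr do under eq_bigr do
  rewrite /= (linear_delta_sum _ _ _ linA) mulr_sumr.
rewrite pair_big exchange_big /=; apply: eq_bigr => r _.
rewrite exchange_big /=; apply: eq_bigr => s _; apply: eq_bigr => kl _.
by rewrite -mulrA [_ * P _ _ _]mulrC.
Qed.

End Adjoint.

Section PartialDerivatives.
Context {R : realFieldType}.
Variables (a1 b1 a2 b2 a3 b3 : nat).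
Variable phi : 'M[R]_(a1, b1) -> 'M[R]_(a2, b2) -> 'M[R]_(a3, b3).

(* Joint regularity of a map of two matrix arguments is expressed through the
   flattened pair [row_mx (mxvec p) (mxvec y)]. *)
Definition mx_pair (p : 'M[R]_(a1, b1)) (y : 'M[R]_(a2, b2)) :
    'M[R]_(1, a1 * b1 + a2 * b2) :=
  row_mx (mxvec p) (mxvec y).

Definition mx_uncurry (z : 'M[R]_(1, a1 * b1 + a2 * b2)) : 'M[R]_(a3, b3) :=
  phi (vec_mx (lsubmx z)) (vec_mx (rsubmx z)).

Lemma mx_pairP k p p' y y' :
  mx_pair (k *: p + p') (k *: y + y') = k *: mx_pair p y + mx_pair p' y'.
Proof. by rewrite /mx_pair !linearP /= scale_row_mx add_row_mx. Qed.

Lemma mx_uncurry_pair p y : mx_uncurry (mx_pair p y) = phi p y.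
Proof. by rewrite /mx_uncurry /mx_pair row_mxKl row_mxKr !mxvecK. Qed.

Lemma mx_pair_split p y : mx_pair p y = mx_pair p 0 + mx_pair 0 y.
Proof. by have := mx_pairP 1 p 0 0 y; rewrite !scale1r add0r addr0. Qed.

Lemma C2sym_mx_pair_split y : C2sym_mx (mx_pair^~ y).
Proof.
rewrite (_ : mx_pair^~ y = fun p => mx_pair p 0 + mx_pair 0 y).
  apply: C2sym_mx_addr; apply: C2sym_mx_linear => k p p'.
  by rewrite -mx_pairP scaler0 addr0.
by apply/funext => p; rewrite mx_pair_split.
Qed.

Lemma C2sym_mx_pair_r p : C2sym_mx (mx_pair p).
Proof.
rewrite (_ : mx_pair p = fun y => mx_pair 0 y + mx_pair p 0).
  apply: C2sym_mx_addr; apply: C2sym_mx_linear => k y y'.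
  by rewrite -mx_pairP scaler0 addr0.
by apply/funext => y; rewrite mx_pair_split addrC.
Qed.

Hypothesis phiC2 : C2sym_mx mx_uncurry.

Lemma C2sym_mx_partial_l y : C2sym_mx (phi^~ y).
Proof.
rewrite (_ : phi^~ y = mx_uncurry \o mx_pair^~ y).
  exact: C2sym_mx_comp phiC2 (C2sym_mx_pair_split y).
by apply/funext => p; rewrite -mx_uncurry_pair.
Qed.

Lemma C2sym_mx_partial_r p : C2sym_mx (phi p).
Proof.
rewrite (_ : phi p = mx_uncurry \o mx_pair p).
  exact: C2sym_mx_comp phiC2 (C2sym_mx_pair_r p).
by apply/funext => y; rewrite -mx_uncurry_pair.
Qed.

Lemma derive_partial_l u p y :
  'D_u (phi^~ y) p = 'D_(mx_pair u 0) mx_uncurry (mx_pair p y).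
Proof.
apply: derive_line_eq => h.
by rewrite -mx_pairP scaler0 add0r mx_uncurry_pair.
Qed.

Lemma derive_partial_r v p y :
  'D_v (phi p) y = 'D_(mx_pair 0 v) mx_uncurry (mx_pair p y).
Proof.
apply: derive_line_eq => h.
by rewrite -mx_pairP scaler0 add0r mx_uncurry_pair.
Qed.

Lemma differentiable_partial_r_param v y p :
  differentiable (fun q => 'D_v (phi q) y) p.
Proof.
rewrite (_ : (fun q => _) = 'D_(mx_pair 0 v) mx_uncurry \o mx_pair^~ y).
  apply: differentiable_comp.
    exact: C2sym_mx_differentiable (C2sym_mx_pair_split y).
  exact: differentiable_derive_mx.
by apply/funext => q; rewrite /= derive_partial_r.
Qed.

Lemma derive_partial_sym u v p y :
  'D_u (fun q => 'D_v (phi q) y) p = 'D_v (fun z => 'D_u (phi^~ z) p) y.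
Proof.
rewrite (_ : (fun q => _) =
    fun q => 'D_(mx_pair 0 v) mx_uncurry (mx_pair q y)); last first.
  by apply/funext => q; rewrite derive_partial_r.
rewrite (_ : (fun z => _) =
    fun z => 'D_(mx_pair u 0) mx_uncurry (mx_pair p z)); last first.
  by apply/funext => z; rewrite derive_partial_l.
apply: (etrans (y := 'D_(mx_pair u 0) ('D_(mx_pair 0 v) mx_uncurry) (mx_pair p y))).
  by apply: derive_line_eq => h; rewrite -mx_pairP scaler0 add0r.
apply: (etrans (derive2_C2sym_mx_sym _ _ _ phiC2)).
by apply: derive_line_eq => h; rewrite -mx_pairP scaler0 add0r.
Qed.

End PartialDerivatives.

Section DerivativeInParameter.
Context {R : realFieldType}.
Variables (a1 b1 a2 b2 a3 b3 a4 b4 : nat).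
Variable phi : 'M[R]_(a1, b1) -> 'M[R]_(a2, b2) -> 'M[R]_(a3, b3).
Variable om : 'M[R]_(a3, b3) -> 'M[R]_(a4, b4).
Hypotheses (phiC2 : C2sym_mx (mx_uncurry phi)) (omC2 : C2sym_mx om).

Lemma derive_param_derive_comp u p v x :
  'D_u (fun q => 'D_('D_v (phi q) x) om (phi q x)) p =
  'D_('D_v (phi p) x) ('D_('D_u (phi^~ x) p) om) (phi p x)
  + 'D_('D_v (fun y => 'D_u (phi^~ y) p) x) om (phi p x).
Proof.
have da : differentiable (phi^~ x) p.
  exact: C2sym_mx_differentiable (C2sym_mx_partial_l phiC2 x).
have dw : differentiable (fun q => 'D_v (phi q) x) p.
  exact: differentiable_partial_r_param.
apply: (etrans (derive_derive_param_mx u omC2 da dw)).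
apply: f_equal2; first exact: derive2_C2sym_mx_sym.
by apply: (congr1 (derive om (phi p x))); exact: derive_partial_sym.
Qed.

End DerivativeInParameter.

Section AdjointDerivativeInParameter.
Context {R : realType}.
Variables (a1 b1 a2 b2 a3 b3 a4 b4 m1 n1 : nat).
Variable phi : 'M[R]_(a1, b1) -> 'M[R]_(a2, b2) -> 'M[R]_(a3, b3).
Variable om : 'M[R]_(a3, b3) -> 'M[R]_(a4, b4).
Variable al : 'M[R]_(m1, n1) -> 'M[R]_(a2, b2).
Hypotheses (phiC2 : C2sym_mx (mx_uncurry phi)) (omC2 : C2sym_mx om).
Hypothesis dal : forall X, differentiable al X.

Lemma adj_derive_param_comp (N : 'M[R]_(a1, b1) -> 'M[R]_(m1, n1) -> 'M[R]_(a4, b4))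
    (al1 : 'M[R]_(m1, n1) -> 'M[R]_(a3, b3)) p0 X V Y :
  (forall p, N p = om \o phi p \o al) -> al1 = phi p0 \o al ->
  adj (fun u => 'D_u (fun p => 'D_V (N p) X) p0) Y =
  adj (fun u => 'D_u (fun p => phi p (al X)) p0)
      (adj (fun e => 'D_('D_V al1 X) (fun y => 'D_e om y) (al1 X)) Y)
  + adj (fun u => 'D_('D_V al X) (fun y => 'D_u (fun p => phi p y) p0) (al X))
      (adj (fun e => 'D_e om (al1 X)) Y).
Proof.
move=> DN ->.
have dphi p y : differentiable (phi p) y.
  exact: C2sym_mx_differentiable y (C2sym_mx_partial_r phiC2 p).
have dom h : differentiable om h := C2sym_mx_differentiable h omC2.
have Dal1 : 'D_V (phi p0 \o al) X = 'D_('D_V al X) (phi p0) (al X).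
  exact: derive_comp V (dal X) (dphi p0 _).
rewrite !adj_comp; first last.
- by move=> k e e'; exact: derive2_dirP omC2.
- by move=> k e e'; exact: derive_dirP (dom _).
rewrite -adjD; apply: (@congr1 _ _ (fun F => adj F Y)); apply/funext => u /=.
rewrite (_ : (fun p => _) = fun p =>
    'D_('D_('D_V al X) (phi p) (al X)) om (phi p (al X))); last first.
  apply/funext => p; rewrite DN.
  apply: (etrans (derive_comp V (dal X) (differentiable_comp (dphi p _) (dom _)))).
  exact: derive_comp _ (dphi p _) (dom _).
apply: (etrans (derive_param_derive_comp phiC2 omC2 _ _ _ _)).
by rewrite Dal1.
Qed.

End AdjointDerivativeInParameter.

Section Tensors.
Context {R : realType}.

Lemma chan_linear a b c k (X Y : @tens R a b c) i :
  chan (k *: X + Y) i = k *: chan X i + chan Y i.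
Proof. by apply/matrixP => r s; rewrite !mxE. Qed.

Lemma mktens_linear a b c k (F G : 'I_c -> 'M[R]_(a, b)) :
  mktens (fun i => k *: F i + G i) = k *: mktens F + mktens G.
Proof. by apply/matrixP => i j; rewrite !mxE linearP /= !mxE. Qed.

Lemma frob_linear_l a b k (M M' N : 'M[R]_(a, b)) :
  frob (k *: M + M') N = k * frob M N + frob M' N.
Proof.
rewrite /frob mulr_sumr -big_split /=; apply: eq_bigr => i _.
rewrite mulr_sumr -big_split /=; apply: eq_bigr => j _.
by rewrite !mxE mulrDl mulrA.
Qed.

Lemma frob_linear_r a b k (M N N' : 'M[R]_(a, b)) :
  frob M (k *: N + N') = k * frob M N + frob M N'.
Proof.
rewrite /frob mulr_sumr -big_split /=; apply: eq_bigr => i _.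
rewrite mulr_sumr -big_split /=; apply: eq_bigr => j _.
by rewrite !mxE mulrDr mulrCA.
Qed.

Lemma Phi_linear p q c (v : 'rV[R]_c) k (U U' : @tens R p q c) :
  Phi v (k *: U + U') = k *: Phi v U + Phi v U'.
Proof.
rewrite /Phi scaler_sumr -big_split /=; apply: eq_bigr => i _.
by rewrite chan_linear scalerDr !scalerA mulrC.
Qed.

Lemma mxat_linear a b k (Q Q' : 'M[R]_(a, b)) i j :
  mxat (k *: Q + Q') i j = k * mxat Q i j + mxat Q' i j.
Proof.
rewrite /mxat; case: (insub i : option 'I_a) => [i'|]; last by rewrite mulr0 addr0.
by case: (insub j : option 'I_b) => [j'|]; rewrite ?mxE // mulr0 addr0.
Qed.

Lemma Kop_linear p q a b c j0 k0 k (X Y : @tens R a b c) :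
  Kop p q j0 k0 (k *: X + Y) = k *: Kop p q j0 k0 X + Kop p q j0 k0 Y.
Proof.
rewrite /Kop -mktens_linear; apply: congr1; apply/funext => i.
by apply/matrixP => r s; rewrite !mxE chan_linear mxat_linear.
Qed.

Lemma conv_linear_l a b c p q nb lb c' D (A : 'M[R]_(c', c))
    k (W W' : @tens R p q c') (X : @tens R a b c) :
  Defs.conv nb lb D A (k *: W + W') X =
  k *: Defs.conv nb lb D A W X + Defs.conv nb lb D A W' X.
Proof.
rewrite /Defs.conv -mktens_linear; apply: congr1; apply/funext => i.
by apply/matrixP => j l; rewrite !mxE chan_linear frob_linear_l.
Qed.

Lemma conv_linear_r a b c p q nb lb c' D (A : 'M[R]_(c', c))
    (W : @tens R p q c') k (X Y : @tens R a b c) :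
  Defs.conv nb lb D A W (k *: X + Y) =
  k *: Defs.conv nb lb D A W X + Defs.conv nb lb D A W Y.
Proof.
rewrite /Defs.conv -mktens_linear; apply: congr1; apply/funext => i.
by apply/matrixP => j l; rewrite !mxE Kop_linear Phi_linear frob_linear_r.
Qed.

Lemma Psiact_linear a b a' b' c (psi : {linear 'M[R]_(a, b) -> 'M[R]_(a', b')})
    k (Y Y' : @tens R a b c) :
  Psiact psi (k *: Y + Y') = k *: Psiact psi Y + Psiact psi Y'.
Proof.
rewrite /Psiact -mktens_linear; apply: congr1; apply/funext => i.
by rewrite chan_linear linearP.
Qed.

Lemma SactE a b c (s : R -> R) (Y : @tens R a b c) : Sact s Y = map_mx s Y.
Proof. by apply/matrixP => i j; rewrite !mxE -map_mxvec mxE vec_mxK mxE. Qed.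

End Tensors.

Section Network.
Context {R : realType} (ar : arch R).

Lemma C2sym_mx_layer_of t k l (g : 'M[R]_(k, l) -> Bsp ar t) :
  C2 (sig ar t) -> C2sym_mx g ->
  C2sym_mx (fun z => Psiact (psi ar t) (Sact (sig ar t) (g z)) : St ar t.+1).
Proof.
move=> [ds dds _] Cg.
rewrite (_ : (fun z => _) = Psiact (psi ar t) \o map_mx (sig ar t) \o g); last first.
  by apply/funext => z; rewrite /= SactE.
apply: C2sym_mx_comp _ Cg; apply: C2sym_mx_comp _ (C2sym_mx_map ds dds).
by apply: C2sym_mx_linear => c Y Y'; exact: Psiact_linear.
Qed.

Lemma C2sym_mx_layer t (w : Wsp ar t) (b : Bsp ar t) :
  C2 (sig ar t) -> C2sym_mx (layer w b).
Proof.
move=> C2t; apply: C2sym_mx_layer_of C2t _; apply: C2sym_mx_addr.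
by apply: C2sym_mx_linear => k X Y; exact: conv_linear_r.
Qed.

Lemma C2sym_mx_layer_W t (b : Bsp ar t) :
  C2 (sig ar t) ->
  C2sym_mx (mx_uncurry (fun (w : Wsp ar t) (y : St ar t) => layer w b y)).
Proof.
move=> C2t; apply: C2sym_mx_layer_of C2t _; apply: C2sym_mx_addr.
apply: C2sym_mx_bilinear.
- by move=> y k x x'; exact: conv_linear_l.
- by move=> x k y y'; exact: conv_linear_r.
- by move=> k z z'; rewrite !linearP.
- by move=> k z z'; rewrite !linearP.
Qed.

Lemma C2sym_mx_layer_B t (w : Wsp ar t) :
  C2 (sig ar t) ->
  C2sym_mx (mx_uncurry (fun (b : Bsp ar t) (y : St ar t) => layer w b y)).
Proof.
move=> C2t; apply: C2sym_mx_layer_of C2t _; apply: C2sym_mx_linear => k z z'.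
by rewrite !linearP conv_linear_r scalerDr [LHS]addrACA.
Qed.

End Network.

Section Composition.
Context {R : realType} (ar : arch R).
Implicit Types (W : Wfam ar) (B : Bfam ar).

Lemma updW_at W t (w : Wsp ar t) : updW W w t = w.
Proof. exact: dfwith_in. Qed.

Lemma updW_other W t (w : Wsp ar t) r : t != r -> updW W w r = W r.
Proof. exact: dfwith_out. Qed.

Lemma updB_at B t (b : Bsp ar t) : updB B b t = b.
Proof. exact: dfwith_in. Qed.

Lemma updB_other B t (b : Bsp ar t) r : t != r -> updB B b r = B r.
Proof. exact: dfwith_out. Qed.

Lemma alphaTo_succ W B n : (0 < n)%N ->
  alphaTo W B n.+1 = layer (W n) (B n) \o alphaTo W B n.
Proof. by case: n. Qed.

Lemma alphaTo_addn W B k s X : (0 < s)%N ->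
  alphaTo W B (k + s) X = omk W B k (alphaTo W B s X).
Proof.
move=> s_gt0; elim: k => [|k IH] //.
change (alphaTo W B (k + s).+1 X =
  layer (W (k + s)) (B (k + s)) (omk W B k (alphaTo W B s X))).
by rewrite alphaTo_succ /= ?IH // addn_gt0 s_gt0 orbT.
Qed.

Lemma castSt_alphaTo W B k k' (e : k = k') X :
  castSt e (alphaTo W B k X) = alphaTo W B k' X.
Proof. by case: k' / e. Qed.

Lemma netF_omega W B L t (ht1 : (1 <= t)%N) (htL : (t <= L)%N) :
  netF W B L = omega W B (L := L) (t := t.+1) htL \o alphaTo W B t.+1.
Proof.
by apply/funext => X; rewrite /netF /omega /= -alphaTo_addn // castSt_alphaTo.
Qed.

Lemma alphaTo_eq W W' B B' s :
  (forall r, (r < s)%N -> W' r = W r) -> (forall r, (r < s)%N -> B' r = B r) ->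
  alphaTo W' B' s = alphaTo W B s.
Proof.
elim: s => [|[|s] IH] eqW eqB //.
have eqW' r : (r < s.+1)%N -> W' r = W r by move=> lt_rs; apply/eqW/ltnW.
have eqB' r : (r < s.+1)%N -> B' r = B r by move=> lt_rs; apply/eqB/ltnW.
by rewrite !(alphaTo_succ _ _ (ltn0Sn s)) (IH eqW' eqB') eqW ?eqB.
Qed.

Lemma omk_eq W W' B B' k t :
  (forall r, (t <= r)%N -> W' r = W r) -> (forall r, (t <= r)%N -> B' r = B r) ->
  omk W' B' k (t := t) = omk W B k (t := t).
Proof.
move=> eqW eqB; elim: k => [|k IH] //=; apply/funext => y.
by rewrite IH eqW ?eqB // leq_addl.
Qed.

Lemma netF_split W W' B B' L t (ht1 : (1 <= t)%N) (htL : (t <= L)%N) :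
  (forall r, t != r -> W' r = W r) -> (forall r, t != r -> B' r = B r) ->
  netF W' B' L =
  omega W B (L := L) (t := t.+1) htL \o layer (W' t) (B' t) \o alphaTo W B t.
Proof.
move=> eqW eqB; rewrite (netF_omega _ _ ht1) (alphaTo_succ _ _ ht1).
have lt_neq r : (r < t)%N -> t != r by move=> lt_rt; rewrite gtn_eqF.
have gt_neq r : (t < r)%N -> t != r by move=> lt_tr; rewrite ltn_eqF.
rewrite (alphaTo_eq (W := W) (B := B)) => [|r /lt_neq|r /lt_neq];
  [|exact: eqW|exact: eqB].
by rewrite /omega (omk_eq (W := W) (B := B)) => // r /gt_neq; [exact: eqW|exact: eqB].
Qed.

Lemma C2sym_mx_omk W B k t :
  (forall j, (j < k)%N -> C2 (sig ar (j + t))) -> C2sym_mx (omk W B k (t := t)).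
Proof.
elim: k => [|k IH] C2k; first by move=> i j; exact: C2sym_coord.
have C2k' j : (j < k)%N -> C2 (sig ar (j + t)) by move=> lt_jk; apply/C2k/ltnW.
exact: C2sym_mx_comp (C2sym_mx_layer (W (k + t)) (B (k + t)) (C2k k (ltnSn k)))
  (IH C2k').
Qed.

Lemma C2sym_mx_castSt i j (e : i = j) k l (f : 'M[R]_(k, l) -> St ar i) :
  C2sym_mx f -> C2sym_mx (castSt e \o f).
Proof. by case: j / e. Qed.

Lemma C2sym_mx_omega W B L t (htL : (t <= L)%N) :
  arch_wf ar L -> C2sym_mx (omega W B (L := L) (t := t.+1) htL).
Proof.
move=> wf; rewrite /omega; apply: C2sym_mx_castSt; apply: C2sym_mx_omk => j lt_j.
by case: (wf (j + t.+1)%N) => //; apply/andP; split; lia.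
Qed.

Lemma C2sym_mx_alphaTo W B L s :
  arch_wf ar L -> (0 < s <= L.+1)%N -> C2sym_mx (alphaTo W B s).
Proof.
move=> wf /andP[s_gt0 le_sL]; elim: s s_gt0 le_sL => [|[|s] IH] s_gt0 le_sL.
- by rewrite ltnn in s_gt0.
- by move=> i j; exact: C2sym_coord.
have [| _ _ _ C2s] := wf s.+1; first by apply/andP; split; lia.
rewrite (alphaTo_succ _ _ (ltn0Sn s)).
exact: C2sym_mx_comp (C2sym_mx_layer (W s.+1) (B s.+1) C2s) (IH isT (ltnW le_sL)).
Qed.

End Composition.

Theorem theorem11 (R : realType) (ar : arch R) (L : nat)
    (W : Wfam ar) (B : Bfam ar) (V X : St ar 1) (t : nat)
    (Hwf : arch_wf ar L) (ht1 : (1 <= t)%N) (htL : (t <= L)%N) :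
  (forall Y : St ar L.+1,
     adj (fun u : Wsp ar t =>
            'D_u (fun w : Wsp ar t => 'D_V (netF (updW W w) B L) X) (W t)) Y
     = adj (fun u : Wsp ar t =>
              'D_u (fun w : Wsp ar t => layer w (B t) (alphaTo W B t X)) (W t))
           (adj (fun e : St ar t.+1 =>
                   'D_('D_V (alphaTo W B t.+1) X)
                      (fun y : St ar t.+1 => 'D_e (@omega R ar W B L t.+1 htL) y)
                      (alphaTo W B t.+1 X)) Y)
       + adj (fun u : Wsp ar t =>
                'D_('D_V (alphaTo W B t) X)
                   (fun y : St ar t =>
                      'D_u (fun w : Wsp ar t => layer w (B t) y) (W t))
                   (alphaTo W B t X))
             (adj (fun e : St ar t.+1 =>
                     'D_e (@omega R ar W B L t.+1 htL) (alphaTo W B t.+1 X)) Y))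
  /\
  (forall Y : St ar L.+1,
     adj (fun u : Bsp ar t =>
            'D_u (fun b : Bsp ar t => 'D_V (netF W (updB B b) L) X) (B t)) Y
     = adj (fun u : Bsp ar t =>
              'D_u (fun b : Bsp ar t => layer (W t) b (alphaTo W B t X)) (B t))
           (adj (fun e : St ar t.+1 =>
                   'D_('D_V (alphaTo W B t.+1) X)
                      (fun y : St ar t.+1 => 'D_e (@omega R ar W B L t.+1 htL) y)
                      (alphaTo W B t.+1 X)) Y)
       + adj (fun u : Bsp ar t =>
                'D_('D_V (alphaTo W B t) X)
                   (fun y : St ar t =>
                      'D_u (fun b : Bsp ar t => layer (W t) b y) (B t))
                   (alphaTo W B t X))
             (adj (fun e : St ar t.+1 =>
                     'D_e (@omega R ar W B L t.+1 htL) (alphaTo W B t.+1 X)) Y)).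
Proof.
have [| _ _ _ C2t] := Hwf t; first by rewrite ht1 htL.
have omC2 := C2sym_mx_omega W B htL Hwf.
have dal X' : differentiable (alphaTo W B t) X'.
  by apply: C2sym_mx_differentiable; apply: C2sym_mx_alphaTo Hwf _; rewrite ht1 leqW.
have al1E := alphaTo_succ W B ht1.
split=> Y.
- apply: (adj_derive_param_comp (N := fun w => netF (updW W w) B L)
    (C2sym_mx_layer_W (B t) C2t) omC2 dal X V Y _ al1E) => w.
  rewrite (netF_split (W := W) (B := B) ht1 htL) ?updW_at // => r.
  exact: updW_other.
- apply: (adj_derive_param_comp (N := fun b => netF W (updB B b) L)
    (C2sym_mx_layer_B (W t) C2t) omC2 dal X V Y _ al1E) => b.
  rewrite (netF_split (W := W) (B := B) ht1 htL) ?updB_at // => r.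
  exact: updB_other.
Qed.
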